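(* Let $T\in S(\lambda,\mu)$ and let $\tau$ be a row-standard filling of shape $\lambda$ and content $\mu$ with $\mathrm{st}(\tau)=T$. Then $\tau$ can be obtained from $T$ by a finite sequence of admissible transpositions, and the minimum number of admissible transpositions in such a sequence is $\mathrm{inv}(\tau)$.
   Context: A shape is a partition $\lambda=(\lambda_1\ge\dots\ge\lambda_m\ge1)$ with $\lambda_i$ left-justified boxes in row $i$ (rows top to bottom, columns left to right). A content is $\mu=(\mu_1,\dots,\mu_M)$, all $\mu_i\ge1$, $\sum\mu_i=\sum\lambda_i$; a filling of content $\mu$ uses value $v$ exactly $\mu_v$ times; row-standard means rows strictly increase left to right. $S(\lambda,\mu)$: row-standard fillings with weakly increasing columns. Inversion pairs of a row-standard $\tau$: for a box $c$ and $r\ge1$ let $c^{(r)}$ be the box $r$ positions to its right, if it exists. For distinct boxes $c,c'$ in the same column with $\tau(c)<\tau(c')$, let $r\ge1$ be least such that one of $c^{(r)},c'^{(r)}$ does not exist or both exist with $\tau(c^{(r)})\ne\tau(c'^{(r)})$. $(c,c')$ is an inversion pair if either (one does not exist and $c$ lies below $c'$) or (both exist and $\tau(c^{(r)})>\tau(c'^{(r)})$); $\mathrm{inv}(\tau)$ is the number of inversion pairs. $\mathrm{st}(\tau)$: sort each column weakly increasingly. Height order: on the boxes of each column of a row-standard $\tau$ a total order $\blacktriangleleft$ is defined, column by column from right to left: for distinct boxes $c,c'$ in column $j$, if at least one of them has no box directly to its right then $c\blacktriangleleft c'$ iff $c$ is above $c'$; if both have right neighbours $b,b'$, then $c\blacktriangleleft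 c'$ iff $\tau(b)<\tau(b')$, or $\tau(b)=\tau(b')$ and $b\blacktriangleleft b'$ (in column $j+1$). The height of a box is its rank in this order within its column. A partial row transposition at two boxes $c,c'$ of column $j$ (in rows $i_1,i_2$) with $\tau(c)<\tau(c')$ and heights differing by exactly $1$ swaps the contents of rows $i_1$ and $i_2$ in columns $1,\dots,j$ (columns $>j$ unchanged); it is admissible if $\tau(c)$ and $\tau(c')$ are both smaller than the entries directly to the right of $c$ and of $c'$ (whenever these exist), i.e. the result is again row-standard. *)

(* Fillings are lists of rows (top to bottom), each row a
   list of values (left to right); boxes are 0-indexed (row i, column j). *)
From mathcomp Require Import all_boot.
Set Implicit Arguments. Unset Strict Implicit. Unset Printing Implicit Defensive.

Definition filling := seq (seq nat).

Definition row (t : filling) (i : nat) : seq nat := nth [::] t i.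
Definition ent (t : filling) (i j : nat) : nat := nth 0 (row t i) j.
Definition hasbox (t : filling) (i j : nat) : bool := (i < size t) && (j < size (row t i)).

Definition is_shape (lam : seq nat) : Prop :=
  sorted geq lam /\ all (fun x => 0 < x) lam.

Definition is_content (lam mu : seq nat) : Prop :=
  all (fun x => 0 < x) mu /\ sumn mu = sumn lam.

(* t is a filling of shape lam and content mu: values are 1..size mu,
   value v used exactly mu_v times (mu_v = nth 0 mu (v-1)) *)
Definition is_filling (lam mu : seq nat) (t : filling) : Prop :=
  map size t = lam /\
  all (fun x => (0 < x) && (x <= size mu)) (flatten t) /\
  (forall v, v < size mu -> count_mem v.+1 (flatten t) = nth 0 mu v).

Definition row_standard (t : filling) : Prop :=
  all (fun r => sorted ltn r) t.

Definition col_weak (t : filling) : Prop :=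
  forall i j, hasbox t i.+1 j -> ent t i j <= ent t i.+1 j.

Definition in_S (lam mu : seq nat) (t : filling) : Prop :=
  is_filling lam mu t /\ row_standard t /\ col_weak t.

Definition column (t : filling) (j : nat) : seq nat :=
  [seq nth 0 r j | r <- t & j < size r].

(* st(t): sort each column weakly increasingly (for partition shapes the
   rows having a box in column j are exactly the first ones) *)
Definition st (t : filling) : filling :=
  mkseq (fun i => mkseq (fun j => nth 0 (sort leq (column t j)) i) (size (row t i)))
        (size t).

(* Height order: hlt t fuel j i i' means box (i,j) <| box (i',j). *)
Fixpoint hlt_aux (t : filling) (fuel j i i' : nat) : bool :=
  match fuel with
  | 0 => false
  | f.+1 =>
      if ~~ hasbox t i j.+1 || ~~ hasbox t i' j.+1 then i < i'
      else (ent t i j.+1 < ent t i' j.+1) ||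
           ((ent t i j.+1 == ent t i' j.+1) && hlt_aux t f j.+1 i i')
  end.
Definition hlt (t : filling) (j i i' : nat) : bool :=
  hlt_aux t (size (row t i)) j i i'.

Definition height (t : filling) (i j : nat) : nat :=
  (count (fun i' => [&& i' != i, hasbox t i' j & hlt t j i' i]) (iota 0 (size t))).+1.

(* inversion test for boxes c=(i,j), c'=(i',j): at the least r >= 1 where
   one of c^(r), c'^(r) is missing or their entries differ *)
Fixpoint inv_aux (t : filling) (fuel j i i' : nat) : bool :=
  match fuel with
  | 0 => false
  | f.+1 =>
      if ~~ hasbox t i j.+1 || ~~ hasbox t i' j.+1 then i' < i  (* c below c' *)
      else if ent t i j.+1 != ent t i' j.+1 then ent t i' j.+1 < ent t i j.+1
      else inv_aux t f j.+1 i i'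
  end.
Definition inversion_pair (t : filling) (i i' j : nat) : bool :=
  [&& i != i', hasbox t i j, hasbox t i' j, ent t i j < ent t i' j &
      inv_aux t (size (row t i)) j i i'].

Definition inv_count (t : filling) : nat :=
  \sum_(i < size t) \sum_(i' < size t) \sum_(j < size (row t i)) inversion_pair t i i' j.

Definition prt (t : filling) (i1 i2 j : nat) : filling :=
  mkseq (fun k =>
    if k == i1 then take j.+1 (row t i2) ++ drop j.+1 (row t i1)
    else if k == i2 then take j.+1 (row t i1) ++ drop j.+1 (row t i2)
    else row t k) (size t).

Definition admissible_at (t : filling) (i1 i2 j : nat) : bool :=
  [&& (hasbox t i1 j.+1 ==> (ent t i1 j < ent t i1 j.+1) && (ent t i2 j < ent t i1 j.+1))
    & (hasbox t i2 j.+1 ==> (ent t i1 j < ent t i2 j.+1) && (ent t i2 j < ent t i2 j.+1))].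

Definition adm_step (s s' : filling) : Prop :=
  row_standard s /\
  exists i1 i2 j,
    [/\ [&& i1 != i2, hasbox s i1 j, hasbox s i2 j & ent s i1 j < ent s i2 j],
        (height s i1 j == (height s i2 j).+1) || (height s i2 j == (height s i1 j).+1),
        admissible_at s i1 i2 j & s' = prt s i1 i2 j].

Fixpoint reach (n : nat) (s s' : filling) : Prop :=
  match n with
  | 0 => s = s'
  | n'.+1 => exists s'', adm_step s s'' /\ reach n' s'' s'
  end.

From mathcomp Require Import all_boot zify.
Set Implicit Arguments. Unset Strict Implicit. Unset Printing Implicit Defensive.

(* The height order of a column compares two boxes by the words to their
   right, lexicographically, with the upper row first when one word is a
   prefix of the other; an inversion pair is a pair of boxes of a column
   whose entries increase while their heights decrease.  If boxes a, b of
   column j are adjacent in the height order and carry distinct entries,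
   the partial row transposition at (a, b, j) relabels the rows a <-> b in
   every column k < j without changing how any two boxes there compare,
   leaves the columns k > j untouched, and in column j only changes the
   status of the pair (a, b).  Hence an admissible transposition changes inv
   by exactly one and preserves st, and inv vanishes exactly on the column-weak
   fillings, which gives the lower bound.  Conversely, while inv > 0 some
   inversion pair is adjacent in the height order, and undoing it is an
   admissible transposition lowering inv by one. *)

Fixpoint lexlt (s s' : seq nat) (i i' : nat) : bool :=
  match s, s' with
  | x :: s1, y :: s1' => (x < y) || ((x == y) && lexlt s1 s1' i i')
  | _, _ => i < i'
  end.

Lemma lexlt_irr s i : lexlt s s i i = false.
Proof. by elim: s => [|x s IH] /=; rewrite ltnn // eqxx IH. Qed.

Lemma lexlt_asym s s' i i' : lexlt s s' i i' -> lexlt s' s i' i = false.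
Proof.
elim: s s' => [|x s IH] [|y s'] //=; try lia.
by case: (ltngtP x y) => //= _; apply: IH.
Qed.

Lemma lexlt_total s s' i i' : i != i' -> lexlt s s' i i' || lexlt s' s i' i.
Proof.
move=> ne; elim: s s' => [|x s IH] [|y s'] //=; try lia.
by case: (ltngtP x y) => //=.
Qed.

(* The tie-break by indices is consistent when the shorter word always
   carries the larger index, which is how rows of a partition shape behave. *)
Definition shorter_below (s s' : seq nat) (i i' : nat) : bool :=
  ((size s < size s') ==> (i' < i)) && ((size s' < size s) ==> (i < i')).

Lemma lexlt_trans s1 s2 s3 i1 i2 i3 :
  shorter_below s1 s2 i1 i2 -> shorter_below s2 s3 i2 i3 ->
  shorter_below s1 s3 i1 i3 ->
  lexlt s1 s2 i1 i2 -> lexlt s2 s3 i2 i3 -> lexlt s1 s3 i1 i3.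
Proof.
rewrite /shorter_below.
elim: s1 s2 s3 => [|x s1 IH] [|y s2] [|z s3] /=; try lia.
move=> C12 C23 C13.
have /IH {}IH : shorter_below s1 s2 i1 i2 by rewrite /shorter_below; lia.
have /IH {}IH : shorter_below s2 s3 i2 i3 by rewrite /shorter_below; lia.
have /IH {}IH : shorter_below s1 s3 i1 i3 by rewrite /shorter_below; lia.
case/orP => [H1|/andP[/eqP E1 H1]]; case/orP => [H2|/andP[/eqP E2 H2]].
- by rewrite (ltn_trans H1 H2).
- by rewrite -E2 H1.
- by rewrite E1 H2.
- by rewrite E1 E2 eqxx IH // orbT.
Qed.

Lemma lexlt_cat2l u x y i i' : lexlt (u ++ x) (u ++ y) i i' = lexlt x y i i'.
Proof. by elim: u => //= a u ->; rewrite ltnn eqxx. Qed.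

Lemma lexlt_cat_neq u w x y x' y' i i' i2 i2' : size u = size w -> u != w ->
  lexlt (u ++ x) (w ++ y) i i' = lexlt (u ++ x') (w ++ y') i2 i2'.
Proof.
elim: u w => [|a u IH] [|b w] //= [Hs]; rewrite eqseq_cons.
by case: (eqVneq a b) => [<-|] //= ?; rewrite ltnn IH.
Qed.

Lemma lexlt_catl_short u x v i i' :
  size v < size u -> lexlt (u ++ x) v i i' = lexlt u v i i'.
Proof. by elim: u v => [|a u IH] [|b v] //= H; rewrite IH. Qed.

Lemma lexlt_catr_short u x v i i' :
  size v < size u -> lexlt v (u ++ x) i i' = lexlt v u i i'.
Proof. by elim: u v => [|a u IH] [|b v] //= H; rewrite IH. Qed.

Lemma lexlt_tiebreak s v i i' i2 i2' :
  (i < i') = (i2 < i2') -> lexlt s v i i' = lexlt s v i2 i2'.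
Proof. by move=> E; elim: s v => [|a s IH] [|b v] //=; rewrite IH. Qed.

Lemma lexlt_leq s s' i i' : i < i' ->
  (forall k, k < minn (size s) (size s') -> nth 0 s k <= nth 0 s' k) ->
  lexlt s s' i i'.
Proof.
move=> Hi; elim: s s' => [|x s IH] [|y s'] //= H.
have /= := H 0; rewrite minnSS => /(_ isT); rewrite leq_eqVlt => /orP[/eqP->|->//].
rewrite ltnn eqxx /=; apply: IH => k Hk.
by have := H k.+1; rewrite minnSS ltnS; apply.
Qed.

Definition rsuffix (t : filling) (i j : nat) : seq nat := drop j.+1 (row t i).

(* The height order [hlt] of column j, without fuel and extended to rows
   having no box in column j. *)
Definition hless (t : filling) (j p q : nat) : bool :=
  lexlt (rsuffix t p j) (rsuffix t q j) p q.

Definition shaped (t : filling) : bool := sorted geq (map size t).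

Lemma row_default t i : size t <= i -> row t i = [::].
Proof. by move=> H; rewrite /row nth_default. Qed.

Lemma hasboxE t i j : hasbox t i j = (j < size (row t i)).
Proof. by rewrite /hasbox; case: ltnP => // H; rewrite row_default. Qed.

Lemma hasbox_ltsize t i j : hasbox t i j -> i < size t.
Proof. by case/andP. Qed.

Lemma rsuffixE t i j : rsuffix t i j =
  if j.+1 < size (row t i) then ent t i j.+1 :: rsuffix t i j.+1 else [::].
Proof.
rewrite /rsuffix /ent; case: ltnP => H; first by rewrite (drop_nth 0 H).
by rewrite drop_oversize.
Qed.

Lemma nth_rsuffix t i k m : nth 0 (rsuffix t i k) m = ent t i (k.+1 + m).
Proof. by rewrite /rsuffix nth_drop. Qed.

Lemma size_rsuffix t i k : size (rsuffix t i k) = size (row t i) - k.+1.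
Proof. by rewrite /rsuffix size_drop. Qed.

Lemma hlt_aux_lexlt t f j i i' : j < size (row t i) -> size (row t i) <= f + j ->
  hlt_aux t f j i i' = lexlt (rsuffix t i j) (rsuffix t i' j) i i'.
Proof.
elim: f j => [|f IH] j H1 H2; first by lia.
rewrite /= !hasboxE (rsuffixE t i) (rsuffixE t i').
case: (ltnP j.+1 (size (row t i))) => Hi; case: (ltnP j.+1 (size (row t i'))) => //= Hi'.
by rewrite IH //; lia.
Qed.

Lemma inv_aux_lexlt t f j i i' : j < size (row t i) -> size (row t i) <= f + j ->
  inv_aux t f j i i' = lexlt (rsuffix t i' j) (rsuffix t i j) i' i.
Proof.
elim: f j => [|f IH] j H1 H2; first by lia.
rewrite /= !hasboxE (rsuffixE t i) (rsuffixE t i').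
case: (ltnP j.+1 (size (row t i))) => Hi; case: (ltnP j.+1 (size (row t i'))) => //= Hi'.
by case: ltngtP => //= _; rewrite IH //; lia.
Qed.

Lemma hlt_hless t i i' j : hasbox t i j -> hlt t j i i' = hless t j i i'.
Proof. by rewrite hasboxE => H; rewrite /hlt hlt_aux_lexlt //; lia. Qed.

Lemma inversion_pairE t i i' j : inversion_pair t i i' j =
  [&& i != i', hasbox t i j, hasbox t i' j, ent t i j < ent t i' j & hless t j i' i].
Proof.
rewrite /inversion_pair; case: (i != i') => //=; case Hb: (hasbox t i j) => //=.
by move: Hb; rewrite hasboxE => Hb; rewrite inv_aux_lexlt //; lia.
Qed.

Lemma inversion_pairP t i i' j : inversion_pair t i i' j ->
  [/\ i != i', hasbox t i j, hasbox t i' j, ent t i j < ent t i' j & hless t j i' i].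
Proof. by rewrite inversion_pairE => /and5P. Qed.

Definition two_boxes (t : filling) (a b j : nat) : bool :=
  [&& hasbox t a j, hasbox t b j & a != b].

Lemma inversion_pair_two_boxes t i i' j : inversion_pair t i i' j -> two_boxes t i i' j.
Proof. by case/inversion_pairP => ? ? ? _ _; apply/and3P. Qed.

Definition hbelow (t : filling) (j x : nat) : pred nat :=
  fun i => [&& i != x, hasbox t i j & hless t j i x].

Lemma heightE t x j : height t x j = (count (hbelow t j x) (iota 0 (size t))).+1.
Proof.
rewrite /height; congr S; apply: eq_count => i /=; rewrite /hbelow.
by case: (i != x) => //=; case Bi: (hasbox t i j); rewrite //= hlt_hless.
Qed.

Section ShapedFilling.

Variable t : filling.
Hypothesis t_shaped : shaped t.

Lemma size_row_mono i i' : i <= i' -> size (row t i') <= size (row t i).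
Proof.
move=> Hii; case: (ltnP i' (size t)) => Hi'; last by rewrite (row_default Hi').
have geq_trans : transitive geq by move=> a b c /= ? ?; lia.
have := sorted_leq_nth geq_trans (fun x => leqnn x) 0 t_shaped.
move=> /(_ i i'); rewrite !inE size_map => /(_ (leq_ltn_trans Hii Hi') Hi' Hii).
by rewrite /= !(nth_map [::]) //; apply: leq_ltn_trans Hi'.
Qed.

Lemma hasbox_above i i' j : i <= i' -> hasbox t i' j -> hasbox t i j.
Proof. by move=> /size_row_mono Hii; rewrite !hasboxE => H; lia. Qed.

Lemma hasbox_nobox_ltn p q j : hasbox t p j -> ~~ hasbox t q j -> p < q.
Proof. by move=> Bp; apply: contraNT; rewrite -leqNgt => /hasbox_above; apply. Qed.

Lemma shorter_below_rsuffix p q j : hasbox t p j -> hasbox t q j ->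
  shorter_below (rsuffix t p j) (rsuffix t q j) p q.
Proof.
rewrite /shorter_below !size_rsuffix !hasboxE => Hp Hq.
by case: (ltngtP p q) => [H|H|->]; try have := size_row_mono (ltnW H); lia.
Qed.

Lemma hless_trans j p q r : hasbox t p j -> hasbox t q j -> hasbox t r j ->
  hless t j p q -> hless t j q r -> hless t j p r.
Proof. by move=> Hp Hq Hr; apply: lexlt_trans; apply: shorter_below_rsuffix. Qed.

End ShapedFilling.

Lemma hless_total t j p q : p != q -> hless t j p q || hless t j q p.
Proof. exact: lexlt_total. Qed.

Lemma hless_asym t j p q : hless t j p q -> hless t j q p = false.
Proof. exact: lexlt_asym. Qed.

Lemma hless_irr t j p : hless t j p p = false.
Proof. exact: lexlt_irr. Qed.

Lemma hless_neq t j p q : hless t j p q -> p != q.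
Proof. by apply: contraTneq => ->; rewrite hless_irr. Qed.

Definition transp (a b x : nat) : nat :=
  if x == a then b else if x == b then a else x.

Section Transposition.

Variables a b : nat.

Lemma transpL : transp a b a = b.
Proof. by rewrite /transp eqxx. Qed.

Lemma transpR : a != b -> transp a b b = a.
Proof. by rewrite /transp eq_sym => /negbTE->; rewrite eqxx. Qed.

Lemma transp_id x : x != a -> x != b -> transp a b x = x.
Proof. by rewrite /transp => /negbTE-> /negbTE->. Qed.

Lemma transpK : a != b -> involutive (transp a b).
Proof.
move=> ne x; rewrite /transp.
case: (eqVneq x a) => [->|xa]; first by rewrite eqxx eq_sym (negbTE ne).
case: (eqVneq x b) => [->|xb]; first by rewrite eqxx.
by rewrite (negbTE xa) (negbTE xb).
Qed.

Lemma transp_inj : a != b -> injective (transp a b).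
Proof. by move/transpK/inv_inj. Qed.

Lemma transpC : a != b -> transp b a =1 transp a b.
Proof.
move=> ne x; rewrite /transp.
by case: (eqVneq x a) => [->|xa]; [rewrite (negbTE ne) | case: eqVneq].
Qed.

Lemma transp_ltn n x : a < n -> b < n -> (transp a b x < n) = (x < n).
Proof.
rewrite /transp => Ha Hb.
by case: (eqVneq x a) => [->|_]; [|case: (eqVneq x b) => [->|_]]; rewrite ?Ha ?Hb.
Qed.

End Transposition.

Lemma size_prt t a b j : size (prt t a b j) = size t.
Proof. by rewrite size_mkseq. Qed.

Definition rsegment (t : filling) (i k j : nat) : seq nat := drop k.+1 (take j.+1 (row t i)).

Lemma rsuffix_cat t i k j : k <= j -> rsuffix t i k = rsegment t i k j ++ rsuffix t i j.
Proof.
move=> Hk; rewrite /rsuffix /rsegment.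
rewrite -{1}(cat_take_drop (j - k) (drop k.+1 (row t i))) take_drop drop_drop.
by have -> : j - k + k.+1 = j.+1 by lia.
Qed.

Lemma size_rsegment t i k j : hasbox t i j -> size (rsegment t i k j) = j - k.
Proof. by rewrite hasboxE /rsegment size_drop => H; rewrite size_takel; lia. Qed.

Lemma size_rsegment_nobox t i k j :
  k < j -> ~~ hasbox t i j -> size (rsegment t i k j) < j - k.
Proof. by rewrite hasboxE /rsegment size_drop -leqNgt => Hk H; rewrite take_oversize; lia. Qed.

Lemma rsuffix_nobox t i j : ~~ hasbox t i j -> rsuffix t i j = [::].
Proof. by rewrite hasboxE -leqNgt /rsuffix => H; rewrite drop_oversize //; lia. Qed.

Lemma nth_rsegment_last t i k j :
  k < j -> hasbox t i j -> nth 0 (rsegment t i k j) (j - k.+1) = ent t i j.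
Proof.
by rewrite hasboxE /rsegment /ent => Hk H; rewrite nth_drop nth_take; first congr nth; lia.
Qed.

Lemma columnE t k : column t k =
  [seq ent t i k | i <- [seq i <- iota 0 (size t) | k < size (row t i)]].
Proof. by rewrite /column -{1}(mkseq_nth [::] t) /mkseq filter_map -map_comp. Qed.

Section PartialRowTransposition.

Variables (t : filling) (a b j : nat).
Hypothesis ab_boxes : two_boxes t a b j.

Let Ba : hasbox t a j. Proof. by case/and3P: ab_boxes. Qed.
Let Bb : hasbox t b j. Proof. by case/and3P: ab_boxes. Qed.
Let ab : a != b. Proof. by case/and3P: ab_boxes. Qed.

Lemma row_prt i : row (prt t a b j) i =
  if i == a then take j.+1 (row t b) ++ drop j.+1 (row t a)
  else if i == b then take j.+1 (row t a) ++ drop j.+1 (row t b) else row t i.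
Proof.
rewrite {1}/row /prt; case: (ltnP i (size t)) => H; first by rewrite nth_mkseq.
have Ha := hasbox_ltsize Ba; have Hb := hasbox_ltsize Bb.
have [ia ib] : (i == a) = false /\ (i == b) = false by split; apply/eqP; lia.
by rewrite nth_default ?size_mkseq // ia ib (row_default H).
Qed.

Lemma size_row_prt i : size (row (prt t a b j) i) = size (row t i).
Proof.
move: Ba Bb; rewrite row_prt !hasboxE => Ha Hb.
by case: (eqVneq i a) => [->|_]; [|case: (eqVneq i b) => [->|_]];
  rewrite // size_cat size_takel ?size_drop; lia.
Qed.

Lemma take_prt i : take j.+1 (row (prt t a b j) i) = take j.+1 (row t (transp a b i)).
Proof.
move: Ba Bb; rewrite row_prt /transp !hasboxE => Ha Hb.
by case: (eqVneq i a) => _; [|case: (eqVneq i b) => _];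
  rewrite // take_size_cat // size_takel.
Qed.

Lemma drop_prt i : drop j.+1 (row (prt t a b j) i) = drop j.+1 (row t i).
Proof.
move: Ba Bb; rewrite row_prt !hasboxE => Ha Hb.
by case: (eqVneq i a) => [->|_]; [|case: (eqVneq i b) => [->|_]];
  rewrite // drop_cat size_takel // ltnn subnn drop0.
Qed.

Lemma hasbox_prt i k : hasbox (prt t a b j) i k = hasbox t i k.
Proof. by rewrite !hasboxE size_row_prt. Qed.

Lemma hasbox_transp i k : k <= j -> hasbox t (transp a b i) k = hasbox t i k.
Proof.
move: Ba Bb; rewrite /transp !hasboxE => Ha Hb Hk.
by case: (eqVneq i a) => [->|_]; [|case: (eqVneq i b) => [->|_]]; rewrite //; lia.
Qed.

Lemma ent_prt_le i k : k <= j -> ent (prt t a b j) i k = ent t (transp a b i) k.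
Proof. by move=> Hk; rewrite /ent -(nth_take 0 (_ : k < j.+1)) // take_prt nth_take. Qed.

Lemma ent_prt_gt i k : j < k -> ent (prt t a b j) i k = ent t i k.
Proof.
by move=> Hk; rewrite /ent -[k](subnKC Hk) -!nth_drop drop_prt.
Qed.

Lemma rsuffix_prt_ge i k : j <= k -> rsuffix (prt t a b j) i k = rsuffix t i k.
Proof.
by move=> Hk; rewrite /rsuffix -[k.+1](subnK (_ : j.+1 <= k.+1)) // -!drop_drop drop_prt.
Qed.

Lemma rsuffix_prt_le i k : k <= j ->
  rsuffix (prt t a b j) i k = rsegment t (transp a b i) k j ++ rsuffix t i j.
Proof. by move=> Hk; rewrite (rsuffix_cat _ _ Hk) rsuffix_prt_ge // /rsegment take_prt. Qed.

Lemma hless_prt_ge k p q : j <= k -> hless (prt t a b j) k p q = hless t k p q.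
Proof. by move=> Hk; rewrite /hless !rsuffix_prt_ge. Qed.

Lemma map_size_prt : map size (prt t a b j) = map size t.
Proof.
apply: (eq_from_nth (x0 := 0)); first by rewrite !size_map size_iota.
move=> i; rewrite (size_map size (prt t a b j)) size_prt => Hi.
by rewrite !(nth_map [::]) ?size_prt // size_row_prt.
Qed.

Lemma height_prt i : height (prt t a b j) i j = height t i j.
Proof.
rewrite !heightE size_prt; congr S; apply: eq_count => x.
by rewrite /hbelow hasbox_prt hless_prt_ge.
Qed.

Lemma perm_column_prt k : perm_eq (column (prt t a b j) k) (column t k).
Proof.
have Ha := hasbox_ltsize Ba; have Hb := hasbox_ltsize Bb.
rewrite !columnE size_prt (eq_filter (a2 := fun i => k < size (row t i))); last first.
  by move=> i; rewrite size_row_prt.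
case: (leqP k j) => Hk; last first.
  by rewrite (eq_map (g := fun i => ent t i k)) ?perm_refl // => i; rewrite ent_prt_gt.
rewrite (eq_map (g := fun i => ent t (transp a b i) k)); last by move=> i; rewrite ent_prt_le.
rewrite (map_comp (fun i => ent t i k) (transp a b)); apply/perm_map/uniq_perm.
- by rewrite (map_inj_uniq (transp_inj ab)) filter_uniq // iota_uniq.
- by rewrite filter_uniq // iota_uniq.
move=> x; rewrite -{1}(transpK ab x) (mem_map (transp_inj ab)) !mem_filter !mem_iota.
by rewrite !add0n (transp_ltn _ Ha Hb) -!hasboxE hasbox_transp.
Qed.

Lemma st_prt : st (prt t a b j) = st t.
Proof.
rewrite /st size_prt; apply: eq_mkseq => i; rewrite size_row_prt; apply: eq_mkseq => k.
congr nth; apply/perm_sortP; [exact: leq_total | exact: leq_trans | exact: anti_leq |].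
exact: perm_column_prt.
Qed.

Lemma inversion_pair_prt_gt k p q : j < k ->
  inversion_pair (prt t a b j) p q k = inversion_pair t p q k.
Proof.
by move=> Hk; rewrite !inversion_pairE !hasbox_prt !ent_prt_gt // hless_prt_ge // ltnW.
Qed.

Lemma inversion_pair_prt_eq p q : inversion_pair (prt t a b j) p q j =
  [&& p != q, hasbox t p j, hasbox t q j,
      ent t (transp a b p) j < ent t (transp a b q) j & hless t j q p].
Proof. by rewrite inversion_pairE !hasbox_prt !ent_prt_le // hless_prt_ge. Qed.

Lemma two_boxes_prt : two_boxes (prt t a b j) b a j.
Proof. by rewrite /two_boxes !hasbox_prt Ba Bb eq_sym ab. Qed.

End PartialRowTransposition.

Lemma prtK t a b j : two_boxes t a b j -> prt (prt t a b j) b a j = t.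
Proof.
move=> tab; have ab : a != b by case/and3P: tab.
apply: (eq_from_nth (x0 := [::])); first by rewrite !size_prt.
move=> i _; rewrite -/(row _ i) -/(row t i).
rewrite -(cat_take_drop j.+1 (row (prt _ b a j) i)) -(cat_take_drop j.+1 (row t i)).
by rewrite !take_prt ?two_boxes_prt // !drop_prt ?two_boxes_prt // (transpC ab) transpK.
Qed.

Definition hadjacent (t : filling) (j a b : nat) : Prop :=
  forall r, hasbox t r j -> r != a -> r != b ->
  hless t j r a = hless t j r b /\ hless t j a r = hless t j b r.

Lemma hadjacent_sym t j a b : hadjacent t j a b -> hadjacent t j b a.
Proof. by move=> H r Br rb ra; have [] := H r Br ra rb. Qed.

Lemma hless_transp t j a b p q : hadjacent t j a b -> a != b -> p != q ->
  hasbox t p j -> hasbox t q j ->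
  ~~ ((p == a) && (q == b) || (p == b) && (q == a)) ->
  hless t j p q = hless t j (transp a b p) (transp a b q).
Proof.
move=> adj ab pq Bp Bq C.
case: (eqVneq p a) => [Ep|pa].
  subst p; have qb : q != b by apply: contraNneq C => ->; rewrite !eqxx.
  have qa : q != a by rewrite eq_sym.
  by rewrite transpL (transp_id qa qb); have [_ ->] := adj q Bq qa qb.
case: (eqVneq p b) => [Ep|pb].
  subst p; have qa : q != a by apply: contraNneq C => ->; rewrite !eqxx orbT.
  have qb : q != b by rewrite eq_sym.
  by rewrite transpR // (transp_id qa qb); have [_ ->] := adj q Bq qa qb.
rewrite (transp_id pa pb).
case: (eqVneq q a) => [->|qa]; first by rewrite transpL; have [-> _] := adj p Bp pa pb.
case: (eqVneq q b) => [->|qb]; first by rewrite transpR //; have [-> _] := adj p Bp pa pb.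
by rewrite transp_id.
Qed.

Section AdjacentTransposition.

Variables (t : filling) (a b j : nat).
Hypotheses (t_shaped : shaped t) (ab_boxes : two_boxes t a b j)
  (ab_adj : hadjacent t j a b).

Let Ba : hasbox t a j. Proof. by case/and3P: ab_boxes. Qed.
Let Bb : hasbox t b j. Proof. by case/and3P: ab_boxes. Qed.
Let ab : a != b. Proof. by case/and3P: ab_boxes. Qed.

Lemma nobox_transp x : ~~ hasbox t x j -> transp a b x = x.
Proof. by move=> Bx; apply: transp_id; apply: contraNneq Bx => ->. Qed.

Section DistinctEntries.

Hypothesis ab_ent : ent t a j != ent t b j.

Lemma rsegment_transp_neq k : k < j ->
  rsegment t (transp a b a) k j != rsegment t (transp a b b) k j.
Proof.
move=> Hk; rewrite transpL transpR //.
by apply: contra ab_ent => /eqP E; rewrite -(nth_rsegment_last Hk Ba) -E nth_rsegment_last.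
Qed.

(* The rows to the right of column k < j split at column j; the segments up
   to column j are exchanged by the transposition and those of a and b differ
   in column j, so a tie of segments never involves exactly the pair {a, b}. *)
Lemma hless_prt_lt_boxes k p q : k < j -> p != q -> hasbox t p j -> hasbox t q j ->
  hless (prt t a b j) k p q = hless t k (transp a b p) (transp a b q).
Proof.
move=> Hk pq Bp Bq; have Hk' := ltnW Hk.
rewrite /hless !rsuffix_prt_le //.
rewrite (rsuffix_cat t (transp a b p) Hk') (rsuffix_cat t (transp a b q) Hk').
have Bsp : hasbox t (transp a b p) j by rewrite (hasbox_transp ab_boxes).
have Bsq : hasbox t (transp a b q) j by rewrite (hasbox_transp ab_boxes).
case: (eqVneq (rsegment t (transp a b p) k j) (rsegment t (transp a b q) k j)) => E; last first.
  by apply: lexlt_cat_neq => //; rewrite !size_rsegment.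
rewrite E !lexlt_cat2l; apply: hless_transp => //.
apply/negP => /orP[] /andP[/eqP Pa /eqP Qb]; subst p q; move: E; apply/eqP.
  exact: rsegment_transp_neq.
by rewrite eq_sym; apply: rsegment_transp_neq.
Qed.

Lemma hless_prt_lt_nobox k p q : k < j -> hasbox t p j -> ~~ hasbox t q j ->
  hless (prt t a b j) k p q = hless t k (transp a b p) q /\
  hless (prt t a b j) k q p = hless t k q (transp a b p).
Proof.
move=> Hk Bp Bq; have Hk' := ltnW Hk.
rewrite /hless !rsuffix_prt_le // (nobox_transp Bq) (rsuffix_nobox Bq) cats0.
rewrite (rsuffix_cat t (transp a b p) Hk') (rsuffix_cat t q Hk') (rsuffix_nobox Bq) cats0.
have Bsp : hasbox t (transp a b p) j by rewrite (hasbox_transp ab_boxes).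
have short : size (rsegment t q k j) < size (rsegment t (transp a b p) k j).
  by rewrite (size_rsegment _ Bsp) size_rsegment_nobox.
have lt_pq := hasbox_nobox_ltn t_shaped Bp Bq.
have lt_spq := hasbox_nobox_ltn t_shaped Bsp Bq.
rewrite !lexlt_catl_short // !lexlt_catr_short //; split; apply: lexlt_tiebreak.
  by rewrite lt_pq lt_spq.
by rewrite ltnNge (ltnW lt_pq) ltnNge (ltnW lt_spq).
Qed.

Lemma hless_prt_lt k p q : k < j -> p != q ->
  hless (prt t a b j) k p q = hless t k (transp a b p) (transp a b q).
Proof.
move=> Hk pq.
case Bp: (hasbox t p j); case Bq: (hasbox t q j).
- exact: hless_prt_lt_boxes.
- by rewrite (nobox_transp (negbT Bq)); case: (hless_prt_lt_nobox Hk Bp (negbT Bq)).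
- by rewrite (nobox_transp (negbT Bp)); case: (hless_prt_lt_nobox Hk Bq (negbT Bp)).
- rewrite /hless !rsuffix_prt_le ?(ltnW Hk) // !nobox_transp ?Bp ?Bq //.
  by rewrite -!rsuffix_cat ?(ltnW Hk).
Qed.

Lemma inversion_pair_prt_lt k p q : k < j ->
  inversion_pair (prt t a b j) p q k = inversion_pair t (transp a b p) (transp a b q) k.
Proof.
move=> Hk; rewrite !inversion_pairE (inj_eq (transp_inj ab)) !(hasbox_prt ab_boxes).
rewrite !(hasbox_transp ab_boxes) ?(ltnW Hk) // !(ent_prt_le ab_boxes) ?(ltnW Hk) //.
case: (eqVneq p q) => //= pq.
by rewrite hless_prt_lt // eq_sym.
Qed.

End DistinctEntries.

End AdjacentTransposition.

Definition inv_col (t : filling) (k : nat) : nat :=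
  \sum_(p < size t) \sum_(q < size t) inversion_pair t p q k.

Definition max_row_size (t : filling) : nat := \max_(i < size t) size (row t i).

Lemma size_row_max t i : size (row t i) <= max_row_size t.
Proof.
case: (ltnP i (size t)) => H; last by rewrite row_default.
exact: (@leq_bigmax _ (fun i : 'I_(size t) => size (row t i)) (Ordinal H)).
Qed.

Lemma inv_count_cols t N : (forall i, size (row t i) <= N) ->
  inv_count t = \sum_(k < N) inv_col t k.
Proof.
move=> HN; rewrite /inv_count /inv_col.
have E (i i' : 'I_(size t)) : \sum_(k < size (row t i)) inversion_pair t i i' k =
                              \sum_(k < N) inversion_pair t i i' k.
  rewrite (big_ord_widen N (fun k => (inversion_pair t i i' k : nat)) (HN i)).
  rewrite big_mkcond /=; apply: eq_bigr => k _.
  by case: ltnP => // H; rewrite inversion_pairE hasboxE ltnNge H andbF.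
under eq_bigr => i _ do under eq_bigr => i' _ do rewrite E.
by under eq_bigr => i _ do rewrite exchange_big; rewrite exchange_big.
Qed.

Lemma sum_transp n a b (F : nat -> nat) : a < n -> b < n -> a != b ->
  \sum_(p < n) F (transp a b p) = \sum_(p < n) F p.
Proof.
move=> Ha Hb ab.
have lt_transp (p : 'I_n) : transp a b p < n by rewrite transp_ltn.
pose h (p : 'I_n) : 'I_n := Ordinal (lt_transp p).
have h_inj : injective h by move=> x y /(congr1 val) /(transp_inj ab) /val_inj.
by rewrite [RHS](reindex_inj h_inj).
Qed.

Lemma sum_transp2 n a b (F : nat -> nat -> nat) : a < n -> b < n -> a != b ->
  \sum_(p < n) \sum_(q < n) F (transp a b p) (transp a b q) =
  \sum_(p < n) \sum_(q < n) F p q.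
Proof.
move=> Ha Hb ab; under eq_bigr => p _ do rewrite (sum_transp (F (transp a b p))) //.
exact: (sum_transp (fun p => \sum_(q < n) F p q)).
Qed.

Lemma sum_pair_indicator n a b c : a < n -> b < n ->
  \sum_(p < n) \sum_(q < n) (((p == a :> nat) && (q == b :> nat)) * c) = c.
Proof.
move=> Ha Hb; rewrite (bigD1 (Ordinal Ha)) //= [X in _ + X]big1; last first.
  by move=> p; rewrite -val_eqE /= => /negbTE pa; apply: big1 => q _; rewrite pa.
rewrite addn0 (bigD1 (Ordinal Hb)) //= [X in _ + X]big1; last first.
  by move=> q; rewrite -val_eqE /= => /negbTE qb; rewrite qb andbF.
by rewrite !eqxx mul1n addn0.
Qed.

Section InversionCount.

Variables (t : filling) (a b j : nat).
Hypotheses (t_shaped : shaped t) (ab_boxes : two_boxes t a b j)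
  (ab_ent : ent t a j < ent t b j) (ab_adj : hadjacent t j a b).

Let Ba : hasbox t a j. Proof. by case/and3P: ab_boxes. Qed.
Let Bb : hasbox t b j. Proof. by case/and3P: ab_boxes. Qed.
Let ab : a != b. Proof. by case/and3P: ab_boxes. Qed.
Let ab_ent_neq : ent t a j != ent t b j. Proof. by rewrite neq_ltn ab_ent. Qed.

(* In column j only the pair (a, b) changes status. *)
Lemma inversion_pair_prt_transp p q :
  inversion_pair (prt t a b j) (transp a b p) (transp a b q) j +
    ((p == a) && (q == b)) * hless t j b a =
  inversion_pair t p q j + ((p == a) && (q == b)) * hless t j a b.
Proof.
have off_diag p' q' : p' != q' -> hasbox t p' j -> hasbox t q' j ->
    ent t p' j < ent t q' j -> ~~ ((p' == a) && (q' == b)) ->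
    hless t j (transp a b q') (transp a b p') = hless t j q' p'.
  move=> pq Bp Bq lt_pq off; symmetry; apply: hless_transp => //; first by rewrite eq_sym.
  apply/negP => /orP[] /andP[/eqP Eq /eqP Ep]; subst; last by rewrite !eqxx in off.
  by move: lt_pq; rewrite ltnNge ltnW.
rewrite (inversion_pair_prt_eq ab_boxes) !transpK // (inj_eq (transp_inj ab)).
rewrite !(hasbox_transp ab_boxes) // inversion_pairE.
case: (boolP ((p == a) && (q == b))) => [/andP[/eqP-> /eqP->]|off].
  by rewrite transpL transpR // ab Ba Bb ab_ent /= !mul1n addnC.
rewrite !mul0n !addn0; case pq: (p != q); case Bp: (hasbox t p j) => //=.
case Bq: (hasbox t q j); case lt_pq: (ent t p j < ent t q j) => //=.
by rewrite off_diag.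
Qed.

Lemma inv_col_prt :
  inv_col (prt t a b j) j + hless t j b a = inv_col t j + hless t j a b.
Proof.
have Ha := hasbox_ltsize Ba; have Hb := hasbox_ltsize Bb.
rewrite /inv_col size_prt -(sum_transp2 (fun p q => inversion_pair _ p q j) Ha Hb ab).
rewrite -(sum_pair_indicator (hless t j b a) Ha Hb).
rewrite -(sum_pair_indicator (hless t j a b) Ha Hb) -!big_split.
by apply: eq_bigr => p _; rewrite -!big_split; apply: eq_bigr => q _;
  apply: inversion_pair_prt_transp.
Qed.

Lemma inv_count_prt :
  inv_count (prt t a b j) + hless t j b a = inv_count t + hless t j a b.
Proof.
have Ha := hasbox_ltsize Ba; have Hb := hasbox_ltsize Bb.
have jN : j < max_row_size t.
  by move: Ba; rewrite hasboxE => /leq_trans; apply; apply: size_row_max.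
rewrite (@inv_count_cols (prt t a b j) (max_row_size t)); last first.
  by move=> i; rewrite (size_row_prt ab_boxes) size_row_max.
rewrite (inv_count_cols (size_row_max t)).
rewrite [\sum_(k < _) inv_col (prt t a b j) k](bigD1 (Ordinal jN)) //=.
rewrite [\sum_(k < _) inv_col t k](bigD1 (Ordinal jN)) //= -!addnA.
rewrite [_ + hless t j b a]addnC [_ + hless t j a b]addnC !addnA inv_col_prt.
congr (_ + _); apply: eq_bigr => k; rewrite -val_eqE /= => kj; rewrite /inv_col size_prt.
case: (ltngtP k j) kj => // Hkj _.
  under eq_bigr do under eq_bigr do rewrite inversion_pair_prt_lt ?ab_ent_neq //.
  exact: (sum_transp2 (fun p q => inversion_pair t p q k)).
by under eq_bigr do under eq_bigr do rewrite (inversion_pair_prt_gt ab_boxes) //.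
Qed.

End InversionCount.

Lemma sub_count_ltn (T : eqType) (P Q : pred T) (s : seq T) x :
  subpred P Q -> x \in s -> Q x -> ~~ P x -> count P s < count Q s.
Proof.
move=> PQ; elim: s => [|y s IH] //=; rewrite inE => /orP[/eqP<- Qx Px|xs Qx Px].
  by rewrite (negbTE Px) Qx add1n ltnS sub_count.
by have := IH xs Qx Px; case Py: (P y); rewrite ?(PQ _ Py) /=; lia.
Qed.

Definition hcover (t : filling) (j y x : nat) : Prop :=
  hless t j y x /\ forall r, hasbox t r j -> ~~ (hless t j y r && hless t j r x).

Section Heights.

Variables (t : filling) (j : nat).
Hypothesis t_shaped : shaped t.

Lemma height_lt x y : hasbox t x j -> hasbox t y j -> hless t j x y ->
  height t x j < height t y j.
Proof.
move=> Bx By Lxy; rewrite !heightE ltnS; apply: (sub_count_ltn (x := x)).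
- move=> i /and3P[ix Bi Lix]; apply/and3P; split => //; last exact: hless_trans Lix Lxy.
  by apply: (contraTneq _ Lix) => ->; rewrite hless_asym.
- by rewrite mem_iota add0n (hasbox_ltsize Bx).
- by rewrite /hbelow Bx Lxy (hless_neq Lxy).
- by rewrite /hbelow eqxx.
Qed.

Lemma hcover_of_height x y : hasbox t x j -> hasbox t y j ->
  height t x j = (height t y j).+1 -> hcover t j y x.
Proof.
move=> Bx By Hxy; have xy : x != y by apply/eqP => E; move: Hxy; rewrite E; lia.
split.
  case/orP: (hless_total t j xy) => // /(height_lt Bx By).
  by rewrite Hxy ltnNge leqnSn.
move=> r Br; apply/negP => /andP[/(height_lt By Br) Hyr /(height_lt Br Bx)].
by rewrite Hxy ltnS leqNgt Hyr.
Qed.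

Lemma height_of_hcover x y : hasbox t x j -> hasbox t y j -> hcover t j y x ->
  height t x j = (height t y j).+1.
Proof.
move=> Bx By [Lyx between]; rewrite !heightE; congr S.
have yx := hless_neq Lyx.
rewrite (eq_count (a2 := predU (hbelow t j y) (pred1 y))); last first.
  move=> i; rewrite /hbelow /=.
  case: (eqVneq i y) => [->|iy] /=; first by rewrite yx By Lyx.
  case: (eqVneq i x) => [->|ix] /=; first by rewrite hless_asym // !andbF.
  rewrite orbF; case Bi: (hasbox t i j) => //=; apply/idP/idP => [Lix|Liy].
    by case/orP: (hless_total t j iy) => // Lyi; have := between i Bi; rewrite Lyi Lix.
  exact: hless_trans Liy Lyx.
have := count_predUI (hbelow t j y) (pred1 y) (iota 0 (size t)).
rewrite [count (predI _ _) _](eq_count (a2 := pred0)) => [|i]; last first.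
  by rewrite /hbelow /=; case: (eqVneq i y) => [->|]; rewrite ?eqxx ?andbF.
rewrite count_pred0 addn0 => ->.
have := count_uniq_mem y (iota_uniq 0 (size t)).
by rewrite mem_iota add0n (hasbox_ltsize By) /= => ->; rewrite addn1.
Qed.

Lemma hadjacent_of_hcover x y : hasbox t x j -> hasbox t y j -> hcover t j y x ->
  hadjacent t j x y.
Proof.
move=> Bx By [Lyx between] r Br rx ry; split; apply/idP/idP.
- move=> Lrx; case/orP: (hless_total t j ry) => // Lyr.
  by have := between r Br; rewrite Lyr Lrx.
- by move=> Lry; exact: hless_trans Lry Lyx.
- by move=> Lxr; exact: hless_trans Lyx Lxr.
- move=> Lyr; case/orP: (hless_total t j rx) => // Lrx.
  by have := between r Br; rewrite Lyr Lrx.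
Qed.

End Heights.

Section ColumnWeak.

Variable t : filling.
Hypothesis t_shaped : shaped t.

Lemma col_weak_leq i i' k : col_weak t -> i <= i' -> hasbox t i' k ->
  ent t i k <= ent t i' k.
Proof.
move=> tw Hii; rewrite -(subnKC Hii); elim: (i' - i) => [|d IH]; first by rewrite addn0.
rewrite addnS => B; apply: leq_trans (IH _) (tw _ _ B).
exact: (hasbox_above t_shaped (leqnSn _) B).
Qed.

Lemma inversion_pair_inv_count p q k : inversion_pair t p q k -> 0 < inv_count t.
Proof.
move=> pqk; have [_ Bp Bq _ _] := inversion_pairP pqk.
have Bp' : k < size (row t p) by rewrite -hasboxE.
rewrite /inv_count (bigD1 (Ordinal (hasbox_ltsize Bp))) //=.
by rewrite (bigD1 (Ordinal (hasbox_ltsize Bq))) //= (bigD1 (Ordinal Bp')) //= pqk.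
Qed.

Lemma inv_count_gt0 : 0 < inv_count t -> exists p q k, inversion_pair t p q k.
Proof.
rewrite lt0n /inv_count sum_nat_eq0 => /forallPn[p /=].
rewrite sum_nat_eq0 => /forallPn[q /=]; rewrite sum_nat_eq0 => /forallPn[k /=].
by rewrite eqb0 negbK; exists p, q, k.
Qed.

(* A descent ent(i,k) > ent(i+1,k) with k maximal is an inversion pair.
   Conversely, in a column-weak filling a pair of boxes with increasing
   entries has the first one above the second, hence weakly smaller entries
   to its right, hence first in the height order. *)
Lemma inv_count_eq0 : inv_count t = 0 <-> col_weak t.
Proof.
split=> [inv0 | tw].
  suff ind d k : max_row_size t <= k + d ->
      forall i, hasbox t i.+1 k -> ent t i k <= ent t i.+1 k.
    by move=> i k; apply: (ind (max_row_size t)); rewrite leq_addl.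
  elim: d k => [|d IH] k Hk i B.
    by move: B; rewrite hasboxE => B; have := size_row_max t i.+1; lia.
  rewrite leqNgt; apply/negP => lt_ent.
  suff /inversion_pair_inv_count : inversion_pair t i.+1 i k by rewrite inv0.
  rewrite inversion_pairE gtn_eqF // B lt_ent (hasbox_above t_shaped (leqnSn i) B) /=.
  apply: lexlt_leq => // m; rewrite leq_min !size_rsuffix => /andP[m1 m2].
  by rewrite !nth_rsuffix; apply: IH; rewrite ?hasboxE; lia.
apply/eqP; rewrite -leqn0 leqNgt; apply/negP => /inv_count_gt0[p [q [k]]].
move=> /inversion_pairP[pq Bp Bq lt_ent Lqp].
case: (ltnP q p) => [/ltnW Hqp|Hpq]; first by have := col_weak_leq tw Hqp Bp; lia.
have {}Hpq : p < q by rewrite ltn_neqAle pq.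
rewrite /hless lexlt_asym // in Lqp; apply: lexlt_leq => // m.
rewrite leq_min !size_rsuffix => /andP[m1 m2]; rewrite !nth_rsuffix.
by apply: col_weak_leq tw (ltnW Hpq) _; rewrite hasboxE; lia.
Qed.

End ColumnWeak.

Lemma column_cons r s j : column (r :: s) j =
  if j < size r then nth 0 r j :: column s j else column s j.
Proof. by rewrite /column /=; case: ifP. Qed.

Lemma shaped_behead r s : shaped (r :: s) -> shaped s.
Proof. exact: path_sorted. Qed.

Lemma nth_column t i j : shaped t -> hasbox t i j -> nth 0 (column t j) i = ent t i j.
Proof.
elim: t i => [|r t IH] i ts B; first by case/andP: B.
have Hr : j < size r.
  by move: B; rewrite hasboxE => /leq_trans; apply; apply: (size_row_mono ts (leq0n i)).
rewrite column_cons Hr; case: i B => [|i] B //=.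
by apply: IH; [exact: shaped_behead ts | move: B; rewrite /hasbox /= ltnS].
Qed.

Lemma column_nil t j : shaped t -> size (row t 0) <= j -> column t j = [::].
Proof.
elim: t => [|r t IH] //= ts Hj; rewrite column_cons ltnNge Hj /=.
apply: IH; first exact: shaped_behead ts.
by apply: leq_trans Hj; apply: (size_row_mono ts (leq0n 1)).
Qed.

Lemma sorted_column t j : shaped t -> col_weak t -> sorted leq (column t j).
Proof.
elim: t => [|r t IH] //= ts tw.
have {}IH := IH (shaped_behead ts) (fun i => tw i.+1).
rewrite column_cons; case: ifP => // Hr.
case: t ts tw IH => [|r' t] ts tw IH; first by rewrite /column.
move: IH; rewrite column_cons; case: ifP => Hr' IH.
  rewrite /= in IH *; rewrite IH andbT.
  by have := tw 0 j; rewrite /hasbox /ent /row /= Hr'; apply.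
rewrite column_nil //; first exact: shaped_behead (shaped_behead ts).
have := size_row_mono (shaped_behead ts) (leq0n 1); rewrite /row /= => /leq_trans; apply.
by rewrite leqNgt Hr'.
Qed.

Lemma st_col_weak t : shaped t -> col_weak t -> st t = t.
Proof.
move=> ts tw; apply: (eq_from_nth (x0 := [::])); first by rewrite size_mkseq.
move=> i; rewrite size_mkseq => Hi; rewrite nth_mkseq //.
apply: (eq_from_nth (x0 := 0)); first by rewrite size_mkseq.
move=> j; rewrite size_mkseq => Hj; rewrite nth_mkseq // sorted_sort.
- by rewrite nth_column // /hasbox Hi.
- exact: leq_trans.
- exact: sorted_column.
Qed.

Lemma row_standardP t :
  row_standard t <-> forall i k, hasbox t i k.+1 -> ent t i k < ent t i k.+1.
Proof.
split=> [/(all_nthP [::]) H i k /andP[Hi Hk] | H].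
  by have /(sortedP 0) := H i Hi; apply.
apply/(all_nthP [::]) => i Hi; apply/(sortedP 0) => k Hk.
by apply: H; rewrite /hasbox Hi.
Qed.

Section RowStandard.

Variable t : filling.
Hypotheses (t_shaped : shaped t) (t_rs : row_standard t).

Let ent_succ i k : hasbox t i k.+1 -> ent t i k < ent t i k.+1.
Proof. exact: (proj1 (row_standardP t) t_rs). Qed.

(* Compare the first entries to the right of column j, using that rows
   increase. *)
Lemma hless_ent_next j p q : hasbox t p j.+1 -> hless t j q p -> ent t q j < ent t p j.+1.
Proof.
move=> Bp; rewrite /hless (rsuffixE t p) (rsuffixE t q) -!hasboxE Bp.
case: ifP => Bq /=.
  case/orP => [lt_qp|/andP[/eqP<- _]]; last exact: ent_succ.
  exact: ltn_trans (ent_succ Bq) lt_qp.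
move=> /ltnW/(size_row_mono t_shaped); move: Bp Bq; rewrite !hasboxE; lia.
Qed.

Lemma inversion_pair_split j p q r : inversion_pair t p q j ->
  hasbox t r j -> hless t j q r -> hless t j r p ->
  inversion_pair t r q j \/ inversion_pair t p r j.
Proof.
move=> /inversion_pairP[_ Bp Bq lt_pq _] Br Lqr Lrp; rewrite !inversion_pairE.
have rq : r != q by rewrite eq_sym (hless_neq Lqr).
have pr : p != r by rewrite eq_sym (hless_neq Lrp).
case: (ltnP (ent t r j) (ent t q j)) => [_|le_qr]; [left|right].
  by rewrite rq Br Bq Lqr.
by rewrite pr Bp Br (leq_trans lt_pq le_qr) Lrp.
Qed.

Lemma exists_hcover_inversion j p q : inversion_pair t p q j ->
  exists p' q', inversion_pair t p' q' j /\ hcover t j q' p'.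
Proof.
pose between p q r := [&& hasbox t r j, hless t j q r & hless t j r p].
pose nbetween p q := count (between p q) (iota 0 (size t)).
have covering p' q' : inversion_pair t p' q' j -> ~~ has (between p' q') (iota 0 (size t)) ->
    hcover t j q' p'.
  move=> /inversion_pairP[_ _ _ _ Lqp] none; split=> // r Br.
  apply: contra none => /andP[Lqr Lrp]; apply/hasP; exists r; last by rewrite /between Br Lqr.
  by rewrite mem_iota add0n (hasbox_ltsize Br).
move: {2}(nbetween p q) (leqnn (nbetween p q)) => m.
elim: m p q => [|m IH] p q Hm pqj;
  (case: (boolP (has (between p q) (iota 0 (size t)))) => [some|none];
   last by exists p, q; split; last exact: covering).
  by rewrite has_count in some; move: Hm; rewrite /nbetween; lia.
have [_ Bp Bq _ _] := inversion_pairP pqj.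
move/hasP: some => [r _ /and3P[Br Lqr Lrp]].
have smaller p' q' : subpred (between p' q') (between p q) -> ~~ between p' q' r ->
    nbetween p' q' <= m.
  move=> sub nr; rewrite -ltnS; apply: leq_trans Hm; apply: (sub_count_ltn (x := r) sub) => //.
    by rewrite mem_iota add0n (hasbox_ltsize Br).
  by rewrite /between Br Lqr Lrp.
case: (inversion_pair_split pqj Br Lqr Lrp) => [rqj|prj].
  apply: (IH r q) rqj; apply: smaller; last by rewrite /between hless_irr !andbF.
  by move=> x /and3P[Bx Lqx Lxr]; rewrite /between Bx Lqx (hless_trans _ _ _ _ Lxr Lrp).
apply: (IH p r) prj; apply: smaller; last by rewrite /between hless_irr andbF.
by move=> x /and3P[Bx Lrx Lxp]; rewrite /between Bx Lxp (hless_trans _ _ _ _ Lqr Lrx).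
Qed.

Section UndoInversion.

Variables p q j : nat.
Hypotheses (pqj : inversion_pair t p q j) (qp_cover : hcover t j q p).

Let pq_boxes : two_boxes t p q j := inversion_pair_two_boxes pqj.
Let pq : p != q. Proof. by case/and3P: pq_boxes. Qed.
Let Bp : hasbox t p j. Proof. by case/and3P: pq_boxes. Qed.
Let Bq : hasbox t q j. Proof. by case/and3P: pq_boxes. Qed.
Let lt_pq : ent t p j < ent t q j. Proof. by case/inversion_pairP: pqj. Qed.
Let Lqp : hless t j q p. Proof. by case: qp_cover. Qed.

Lemma row_standard_prt_cover : row_standard (prt t p q j).
Proof.
apply/row_standardP => i k; rewrite (hasbox_prt pq_boxes) => B.
case: (ltngtP k j) => Hkj.
- by rewrite !(ent_prt_le pq_boxes) ?ent_succ ?(hasbox_transp pq_boxes) //; lia.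
- by rewrite !(ent_prt_gt pq_boxes) ?ent_succ //; lia.
subst k; rewrite (ent_prt_le pq_boxes) // (ent_prt_gt pq_boxes) //.
case: (eqVneq i p) B => [->|ip] B; first by rewrite transpL; apply: hless_ent_next.
case: (eqVneq i q) B => [->|iq] B; first by rewrite transpR // (ltn_trans lt_pq) ?ent_succ.
by rewrite transp_id ?ent_succ.
Qed.

Lemma adm_step_prt_cover : adm_step (prt t p q j) t.
Proof.
split; first exact: row_standard_prt_cover.
have qp : q != p by rewrite eq_sym.
exists q, p, j; split; last by rewrite prtK.
- by rewrite qp !(hasbox_prt pq_boxes) Bq Bp !(ent_prt_le pq_boxes) // transpL transpR.
- by rewrite !(height_prt pq_boxes) (height_of_hcover t_shaped Bp Bq qp_cover) eqxx orbT.
rewrite /admissible_at !(hasbox_prt pq_boxes).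
rewrite !(ent_prt_le pq_boxes _ (leqnn j)) !(ent_prt_gt pq_boxes _ (ltnSn j)).
rewrite transpL transpR //.
apply/andP; split; apply/implyP => B; rewrite ent_succ //=.
  by rewrite (ltn_trans lt_pq) ?ent_succ.
exact: hless_ent_next.
Qed.

Lemma inv_count_prt_cover : (inv_count (prt t p q j)).+1 = inv_count t.
Proof.
have := inv_count_prt t_shaped pq_boxes lt_pq (hadjacent_of_hcover t_shaped Bp Bq qp_cover).
by rewrite Lqp hless_asym // addn0 addn1.
Qed.

End UndoInversion.

End RowStandard.

Lemma adm_step_shape s s' : adm_step s s' -> map size s' = map size s.
Proof.
case=> _ [i1 [i2 [j [/and4P[ne B1 B2 _] _ _ ->]]]].
by rewrite map_size_prt // /two_boxes B1 B2 ne.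
Qed.

Lemma adm_step_inv_count s s' : shaped s -> adm_step s s' -> inv_count s' <= (inv_count s).+1.
Proof.
move=> ss [_ [i1 [i2 [j [/and4P[ne B1 B2 lt_ent] heights _ ->]]]]].
have i12_boxes : two_boxes s i1 i2 j by rewrite /two_boxes B1 B2 ne.
have adj : hadjacent s j i1 i2.
  case/orP: heights => /eqP heights.
    exact: (hadjacent_of_hcover ss B1 B2 (hcover_of_height ss B1 B2 heights)).
  exact/hadjacent_sym/(hadjacent_of_hcover ss B2 B1 (hcover_of_height ss B2 B1 heights)).
have := inv_count_prt ss i12_boxes lt_ent adj.
by case: (hless s j i1 i2); case: (hless s j i2 i1) => /=; lia.
Qed.

Lemma inv_count_reach n s s' : shaped s -> reach n s s' -> inv_count s' <= inv_count s + n.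
Proof.
elim: n s => [|n IH] s ss /=; first by move=> ->; rewrite addn0.
move=> [s1 [step reach1]]; have ss1 : shaped s1 by rewrite /shaped (adm_step_shape step).
by have := IH _ ss1 reach1; have := adm_step_inv_count ss step; lia.
Qed.

Lemma reach_rcons n s s1 s2 : reach n s s1 -> adm_step s1 s2 -> reach n.+1 s s2.
Proof.
elim: n s => [|n IH] s /= => [-> step | [s' [step' reach']] step]; first by exists s2.
by exists s'; split=> //; apply: IH step.
Qed.

Lemma reach_st t : shaped t -> row_standard t -> reach (inv_count t) (st t) t.
Proof.
move=> ts t_rs; have [n inv_t] : {n | inv_count t = n} by exists (inv_count t).
rewrite inv_t; elim: n t inv_t ts t_rs => [|n IH] t inv_t ts t_rs.
  by rewrite /= st_col_weak // -(inv_count_eq0 ts).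
have [p [q [j pqj]]] : exists p q j, inversion_pair t p q j by apply: inv_count_gt0; rewrite inv_t.
have [{pqj}p [{}q [pqj qp_cover]]] := exists_hcover_inversion ts pqj.
have pq_boxes := inversion_pair_two_boxes pqj.
rewrite -(st_prt pq_boxes); apply: reach_rcons (adm_step_prt_cover ts t_rs pqj qp_cover).
apply: IH; last exact: (row_standard_prt_cover ts t_rs pqj qp_cover).
- by have := inv_count_prt_cover ts pqj qp_cover; rewrite inv_t => -[].
- by rewrite /shaped map_size_prt.
Qed.

Unset Implicit Arguments.

Theorem mainTheorem8 (lam mu : seq nat) (T tau : filling) :
  is_shape lam -> is_content lam mu ->
  in_S lam mu T ->
  is_filling lam mu tau -> row_standard tau -> st tau = T ->
  (exists n, reach n T tau) /\
  reach (inv_count tau) T tau /\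
  (forall n, reach n T tau -> inv_count tau <= n).
Proof.
move=> [lam_sorted _] _ [[T_shape _] [_ Tw]] [tau_shape _] tau_rs st_tau.
have Ts : shaped T by rewrite /shaped T_shape.
have tau_s : shaped tau by rewrite /shaped tau_shape.
have reach_tau : reach (inv_count tau) T tau by rewrite -st_tau; apply: reach_st.
split; first by exists (inv_count tau).
split=> // n /(inv_count_reach Ts).
by rewrite (proj2 (inv_count_eq0 Ts) Tw).
Qed.
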